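(* Define $\mathrm{Mex}(F)=\min(\mathbb{N}_0\setminus F)$ for $F\subseteq\mathbb{N}_0$, and $a+D=\{a+d:d\in D\}$. Define triples $v(n)=(v_1(n),v_2(n),v_3(n))$, $n\ge 0$, recursively by $v(0)=(0,0,0)$ and, for $n\ge 0$, with $F_n=\{v_i(k): 0\le k\le n,\ i\in\{1,2,3\}\}$ and $D_n=\bigcup_{k=0}^{n}\{v_2(k)-v_1(k),\,v_3(k)-v_2(k),\,v_3(k)-v_1(k)\}$, \[ v_1(n+1)=\mathrm{Mex}(F_n),\quad v_2(n+1)=\mathrm{Mex}\big((v_1(n+1)+D_n)\cup\{1,\dots,v_1(n+1)\}\cup F_n\big), \] \[ v_3(n+1)=\mathrm{Mex}\big((v_2(n+1)+D_n)\cup\{1,\dots,v_2(n+1)\}\cup F_n\big). \] For a finite set $K=\{k_1<k_2<\dots<k_\ell\}\subseteq\mathbb{N}_0$ let $\mathrm{Gap}(K)=\min\{k_{i+1}-k_i: 1\le i\le \ell-1\}$ if $\ell\ge 2$ and $\mathrm{Gap}(K)=\infty$ if $\ell\le 1$. Then for every $n\ge 1$: (a) $v_i(n)-v_i(n-1)\ge i$ for $i=1,2,3$; (b) $v_3(n)-v_1(n)\ge v_3(n-1)-v_1(n-1)+2$; (c) $\mathrm{Gap}(D_{n-1}\cap[\mathrm{Mex}(D_{n-1}),\infty))\ge 2$; (d) $\mathrm{Gap}(F_{n-1}\cap[\mathrm{Mex}(F_{n-1})+\mathrm{Mex}(D_{n-1}),\infty))\ge 3$; (e) $\max F_n=v_3(n)=v_2(n)+\mathrm{Mex}(D_{n-1})$;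 (f) $\max D_n=v_3(n)-v_1(n)$.
   Context: $\mathbb{N}_0$ denotes the nonnegative integers. The triples $v(n)$ are the (sorted) P-positions of the 3D Wythoff $L^1$-Nim game. *)

From mathcomp Require Import all_boot.
Set Implicit Arguments. Unset Strict Implicit. Unset Printing Implicit Defensive.

Lemma mex_ex (s : seq nat) : exists n, n \notin s.
Proof.
exists (sumn s).+1; apply/negP => Hs.
have : forall x, x \in s -> x <= sumn s.
  elim: s {Hs} => [//|y t IH] x; rewrite inE => /orP [/eqP ->|/IH Hx] /=.
    exact: leq_addr.
  exact: (leq_trans Hx (leq_addl _ _)).
by move=> /(_ _ Hs); rewrite ltnn.
Qed.

Definition mex (s : seq nat) : nat := ex_minn (mex_ex s).

Definition triple := (nat * nat * nat)%type.
Definition t1 (t : triple) := t.1.1.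
Definition t2 (t : triple) := t.1.2.
Definition t3 (t : triple) := t.2.

(* F and D computed from a list of triples [v(0); ...; v(n)] *)
Definition F_of (l : seq triple) : seq nat :=
  flatten [seq [:: t1 t; t2 t; t3 t] | t <- l].
Definition D_of (l : seq triple) : seq nat :=
  flatten [seq [:: t2 t - t1 t; t3 t - t2 t; t3 t - t1 t] | t <- l].

Definition shift (a : nat) (s : seq nat) : seq nat := [seq a + d | d <- s].

Definition next_triple (l : seq triple) : triple :=
  let F := F_of l in
  let D := D_of l in
  let a := mex F in
  let b := mex (shift a D ++ iota 1 a ++ F) in
  let c := mex (shift b D ++ iota 1 b ++ F) in
  (a, b, c).

Fixpoint vlist (n : nat) : seq triple :=
  match n with
  | 0 => [:: (0, 0, 0)]
  | m.+1 => rcons (vlist m) (next_triple (vlist m))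
  end.

Definition v (n : nat) : triple := last (0, 0, 0) (vlist n).
Definition v1 n := t1 (v n).
Definition v2 n := t2 (v n).
Definition v3 n := t3 (v n).

Definition F (n : nat) : seq nat :=
  flatten [seq [:: v1 k; v2 k; v3 k] | k <- iota 0 n.+1].
Definition D (n : nat) : seq nat :=
  flatten [seq [:: v2 k - v1 k; v3 k - v2 k; v3 k - v1 k] | k <- iota 0 n.+1].

(* Gap(K): None encodes infinity (|K| <= 1); otherwise the minimum of the
   consecutive differences of the increasing enumeration of K. *)
Definition Gap (K : seq nat) : option nat :=
  let s := sort leq (undup K) in
  match s with
  | [::] | [:: _] => None
  | x :: t =>
      let ds := [seq p.2 - p.1 | p <- zip s t] in
      Some (foldr minn (head 0 ds) ds)
  end.

Definition gap_ge (K : seq nat) (c : nat) : bool :=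
  if Gap K is Some g then c <= g else true.

Definition from (a : nat) (K : seq nat) : seq nat := [seq x <- K | a <= x].

Definition maxs (s : seq nat) : nat := \max_(x <- s) x.

From mathcomp Require Import all_boot.
From mathcomp Require Import zify.

(* Let A = mex F_n and m = mex D_n.  Above m the set D_n is 2-separated and
   above A + m the set F_n is 3-separated, so one of A + m, A + m + 1, A + m + 2
   is neither in F_n nor in A + D_n: thus v2(n+1) <= A + m + 2, and every d
   strictly between m and v2(n+1) - A lies in D_n.  Since m is not in D_n and
   max F_n = v3(n) < v2(n) + m, we get v3(n+1) = v2(n+1) + m.  The three new
   differences either lie below mex D_(n+1) or exceed max D_n by at least 2,
   and the three new values lie below mex F_(n+1) + mex D_(n+1) or exceed
   max F_n by at least 3, which restores the invariant. *)

Set Implicit Arguments.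
Unset Strict Implicit.
Unset Printing Implicit Defensive.

Lemma mex_notin s : mex s \notin s.
Proof. by rewrite /mex; case: ex_minnP. Qed.

Lemma mem_lt_mex s x : x < mex s -> x \in s.
Proof.
rewrite /mex; case: ex_minnP => m _ m_min ltxm.
by apply/negPn/negP => /m_min; rewrite leqNgt ltxm.
Qed.

Lemma mex_le_notin s x : x \notin s -> mex s <= x.
Proof. by rewrite /mex; case: ex_minnP => m _ m_min /m_min. Qed.

Lemma mex_ge_mem s x : (forall y, y < x -> y \in s) -> x <= mex s.
Proof. by move=> lt_mem; rewrite leqNgt; apply/negP => /lt_mem; rewrite (negbTE (mex_notin s)). Qed.

Lemma mex_gt0 s : 0 \in s -> 0 < mex s.
Proof. by move=> s0; apply: mex_ge_mem => y; rewrite ltnS leqn0 => /eqP ->. Qed.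

Lemma mex_subset s s' : {subset s <= s'} -> mex s <= mex s'.
Proof. by move=> ss'; apply: mex_ge_mem => y /mem_lt_mex /ss'. Qed.

Lemma mem_shift a s x : (x \in shift a s) = (a <= x) && (x - a \in s).
Proof.
apply/mapP/andP => [[d ds ->]|[le_ax xs]]; first by rewrite leq_addr addKn.
by exists (x - a); rewrite ?subnKC.
Qed.

Lemma leq_maxs s x : x \in s -> x <= maxs s.
Proof. by move=> xs; rewrite /maxs (@leq_bigmax_seq _ _ xpredT (fun x => x) x). Qed.

Lemma maxs_extend s u w z : u <= z -> w <= z -> maxs s <= z ->
  maxs (s ++ [:: u; w; z]) = z.
Proof.
move=> le_uz le_wz le_sz; apply/eqP; rewrite eqn_leq leq_maxs; last first.
  by rewrite mem_cat !inE eqxx !orbT.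
rewrite andbT; apply/bigmax_leqP_seq => x; rewrite mem_cat !inE => + _.
by case/orP => [/leq_maxs/leq_trans->|/or3P[]/eqP->].
Qed.

Definition separated (g : nat) (K : seq nat) : Prop :=
  forall x y : nat, x \in K -> y \in K -> x < y -> x + g <= y.

Lemma separated_from_mem g a K x y : separated g (from a K) ->
  x \in K -> y \in K -> a <= x -> x < y -> x + g <= y.
Proof.
move=> sepK xK yK le_ax lt_xy.
by apply: sepK; rewrite // mem_filter ?xK ?yK ?le_ax // (leq_trans le_ax (ltnW lt_xy)).
Qed.

Lemma separated_from_le g a a' K :
  separated g (from a K) -> a <= a' -> separated g (from a' K).
Proof.
move=> sepK le_aa' x y; rewrite !mem_filter => /andP[le_a'x xK] /andP[_ yK].
exact: separated_from_mem sepK xK yK (leq_trans le_aa' le_a'x).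
Qed.

Lemma separated_from_extend g a K u w z : separated g (from a K) ->
  u < a -> w < a -> (forall x, x \in K -> x + g <= z) ->
  separated g (from a (K ++ [:: u; w; z])).
Proof.
move=> sepK lt_ua lt_wa K_z x y; rewrite !mem_filter !mem_cat !inE.
move=> /andP[le_ax /orP[xK|/or3P[]/eqP?]] /andP[le_ay /orP[yK|/or3P[]/eqP?]]; subst.
- exact: separated_from_mem sepK xK yK le_ax.
all: try by move=> _; exact: K_z.
all: try have := K_z y yK; lia.
Qed.

Lemma leq_foldr_minn g x0 ds : g <= x0 -> all (leq g) ds -> g <= foldr minn x0 ds.
Proof. by elim: ds => [//|d ds IH] /= le_g0 /andP[le_gd le_gds]; rewrite leq_min le_gd IH. Qed.

Lemma separated_path_diffs g K x t : separated g K -> path ltn x t ->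
  {subset x :: t <= K} -> all (leq g) [seq p.2 - p.1 | p <- zip (x :: t) t].
Proof.
move=> sepK; elim: t x => [//|y t IH] x /= /andP[lt_xy path_yt] sub_K.
rewrite IH // => [|z zt]; last by apply: sub_K; rewrite inE zt orbT.
have := sepK x y (sub_K x (mem_head _ _)); rewrite sub_K ?inE ?eqxx ?orbT //.
by move=> /(_ isT lt_xy); rewrite andbT; lia.
Qed.

Lemma separated_gap_ge g K : separated g K -> gap_ge K g.
Proof.
move=> sepK; rewrite /gap_ge /Gap.
have : sorted ltn (sort leq (undup K)).
  by rewrite ltn_sorted_uniq_leq sort_uniq undup_uniq sort_sorted //; exact: leq_total.
have : {subset sort leq (undup K) <= K} by move=> z; rewrite mem_sort mem_undup.
case: (sort leq (undup K)) => [|x [|y t]] // sub_K path_t.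
have /= /andP[le_g_xy le_g_t] := separated_path_diffs sepK path_t sub_K.
by rewrite leq_min le_g_xy leq_foldr_minn.
Qed.

Definition excluded (x : nat) (s t : seq nat) : seq nat := shift x s ++ iota 1 x ++ t.

Lemma mem_excluded x s t y : (y \in excluded x s t) =
  (x <= y) && (y - x \in s) || (0 < y <= x) || (y \in t).
Proof. by rewrite !mem_cat mem_shift mem_iota add1n ltnS orbA. Qed.

Lemma mex_excluded_le x s t y : x < y -> y - x \notin s -> y \notin t ->
  mex (excluded x s t) <= y.
Proof.
move=> lt_xy ys yt; apply: mex_le_notin.
by rewrite mem_excluded (negbTE ys) (negbTE yt) andbF orbF /=; lia.
Qed.

Lemma mex_excluded_ge x s t : 0 \in t -> x + mex s <= mex (excluded x s t).
Proof.
move=> t0; apply: mex_ge_mem => y lt_y; rewrite mem_excluded.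
have [->|_] := posnP y; first by rewrite t0 orbT.
have [_|lt_xy] := leqP y x; first by rewrite orbT.
by rewrite (ltnW lt_xy) mem_lt_mex //; lia.
Qed.

Lemma vlistE n : vlist n = [seq v k | k <- iota 0 n.+1].
Proof.
elim: n => [//|n IH].
by rewrite -(addn1 n.+1) iotaD map_cat -IH /= cats1 /v /= last_rcons.
Qed.

Lemma vS n : v n.+1 = next_triple (vlist n).
Proof. by rewrite /v /= last_rcons. Qed.

Lemma F_of_vlist n : F_of (vlist n) = F n.
Proof. by rewrite vlistE /F_of -map_comp. Qed.

Lemma D_of_vlist n : D_of (vlist n) = D n.
Proof. by rewrite vlistE /D_of -map_comp. Qed.

Lemma v1S n : v1 n.+1 = mex (F n).
Proof. by rewrite /v1 vS /t1 /= F_of_vlist. Qed.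

Lemma v2S n : v2 n.+1 = mex (excluded (v1 n.+1) (D n) (F n)).
Proof. by rewrite v1S /v2 vS /t2 /= F_of_vlist D_of_vlist. Qed.

Lemma v3S n : v3 n.+1 = mex (excluded (v2 n.+1) (D n) (F n)).
Proof. by rewrite v2S v1S /v3 vS /t3 /= F_of_vlist D_of_vlist. Qed.

Lemma FS n : F n.+1 = F n ++ [:: v1 n.+1; v2 n.+1; v3 n.+1].
Proof. by rewrite /F -(addn1 n.+1) iotaD map_cat flatten_cat. Qed.

Lemma DS n : D n.+1 = D n ++ [:: v2 n.+1 - v1 n.+1; v3 n.+1 - v2 n.+1; v3 n.+1 - v1 n.+1].
Proof. by rewrite /D -(addn1 n.+1) iotaD map_cat flatten_cat. Qed.

Lemma F_sub_FS n : {subset F n <= F n.+1}.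
Proof. by move=> x xF; rewrite FS mem_cat xF. Qed.

Lemma D_sub_DS n : {subset D n <= D n.+1}.
Proof. by move=> x xD; rewrite DS mem_cat xD. Qed.

Lemma mem0_F n : 0 \in F n.
Proof. by elim: n => [//|n IH]; rewrite F_sub_FS. Qed.

Lemma mem0_D n : 0 \in D n.
Proof. by elim: n => [//|n IH]; rewrite D_sub_DS. Qed.

Lemma v1_lt_mexF n : v1 n < mex (F n).
Proof.
case: n => [|n]; first exact: mex_gt0 (mem0_F 0).
apply: mex_ge_mem => y; rewrite ltnS leq_eqVlt => /predU1P[->|].
  by rewrite FS mem_cat mem_head orbT.
by rewrite v1S => /mem_lt_mex /F_sub_FS.
Qed.

Lemma v2S_ge n : v1 n.+1 + mex (D n) <= v2 n.+1.
Proof. by rewrite v2S mex_excluded_ge ?mem0_F. Qed.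

Lemma v3S_ge n : v2 n.+1 + mex (D n) <= v3 n.+1.
Proof. by rewrite v3S mex_excluded_ge ?mem0_F. Qed.

Lemma v1_le_v2 n : v1 n <= v2 n.
Proof. by case: n => [//|n]; apply: leq_trans (v2S_ge n); rewrite leq_addr. Qed.

Lemma v2_le_v3 n : v2 n <= v3 n.
Proof. by case: n => [//|n]; apply: leq_trans (v3S_ge n); rewrite leq_addr. Qed.

Record invariant (n : nat) : Prop := Invariant {
  separated_D : separated 2 (from (mex (D n)) (D n));
  separated_F : separated 3 (from (mex (F n) + mex (D n)) (F n));
  maxs_F : maxs (F n) = v3 n;
  maxs_D : maxs (D n) = v3 n - v1 n;
  v21_lt_mexD : v2 n - v1 n < mex (D n);
  v32_le_v21 : v3 n - v2 n <= v2 n - v1 n }.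

Lemma invariant0 : invariant 0.
Proof.
have mex000 : mex [:: 0; 0; 0] = 1.
  by apply/eqP; rewrite eqn_leq mex_le_notin // mex_gt0.
have F0 : F 0 = [:: 0; 0; 0] by [].
have D0 : D 0 = [:: 0; 0; 0] by [].
split; rewrite ?F0 ?D0 ?mex000 //; try by rewrite /maxs !big_cons big_nil.
all: by move=> x y; rewrite mem_filter !inE; lia.
Qed.

Section Step.

Variable n : nat.
Hypothesis inv : invariant n.

Local Notation a := (v1 n).
Local Notation b := (v2 n).
Local Notation c := (v3 n).
Local Notation m := (mex (D n)).
Local Notation A := (v1 n.+1).
Local Notation B := (v2 n.+1).
Local Notation C := (v3 n.+1).

Lemma mexD_gt0 : 0 < m.
Proof. exact: mex_gt0 (mem0_D n). Qed.

Lemma separated_F_above x y : x \in F n -> y \in F n -> A + m <= x -> x < y -> x + 3 <= y.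
Proof. by rewrite v1S; apply: separated_from_mem; case: inv. Qed.

Lemma separated_D_above x y : x \in D n -> y \in D n -> m <= x -> x < y -> x + 2 <= y.
Proof. by apply: separated_from_mem; case: inv. Qed.

Lemma v2S_le : B <= A + m + 2.
Proof.
have mD := mex_notin (D n); have m_gt0 := mexD_gt0.
rewrite v2S; have [AmF|AmF] := boolP (A + m \in F n); last first.
  by apply: leq_trans (mex_excluded_le _ _ AmF) _; rewrite ?addKn //; lia.
have F_above k : 0 < k < 3 -> A + m + k \notin F n.
  by move=> k_gt0; apply/negP => /(separated_F_above AmF) /=; lia.
have [m1D|m1D] := boolP (m.+1 \in D n); last first.
  apply: leq_trans (mex_excluded_le _ _ (F_above 1 isT)) _; rewrite ?addnK //; try lia.
  by rewrite -addnA addKn addn1.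
have m2D : m.+2 \notin D n by apply/negP => /(separated_D_above m1D) /=; lia.
by apply: mex_excluded_le (F_above 2 isT); rewrite ?addKn -?addnA ?addKn ?addn2 //; lia.
Qed.

Lemma mem_D_between y : m < y -> y < B - A -> y \in D n.
Proof.
move=> lt_my lt_yBA; have le_B := v2S_le; have m_gt0 := mexD_gt0.
have below_B z : z < B -> z \in excluded A (D n) (F n) by rewrite v2S => /mem_lt_mex.
have /below_B : A + y < B by lia.
rewrite mem_excluded addKn leq_addr /= => /orP[/orP[// | /andP[_]] | AyF]; first lia.
have /below_B : A + m < B by lia.
rewrite mem_excluded addKn (negbTE (mex_notin _)) andbF /= => /orP[/andP[_]|AmF]; first lia.
by have := separated_F_above AmF AyF (leqnn _); lia.
Qed.

Lemma v3_lt_v2_add_mexD : c < b + m.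
Proof. by have := v2_le_v3 n; have := v21_lt_mexD inv; have := v32_le_v21 inv; lia. Qed.

Lemma v2_add2_leq_v2S : b + 2 <= B.
Proof.
have := v1_lt_mexF n; rewrite -v1S.
by have := v1_le_v2 n; have := v21_lt_mexD inv; have := v2S_ge n; lia.
Qed.

Lemma v3S_eq : C = B + m.
Proof.
apply/eqP; rewrite eqn_leq v3S_ge andbT v3S; have m_gt0 := mexD_gt0.
apply: mex_excluded_le; rewrite ?addKn ?mex_notin //; first lia.
apply/negP => /leq_maxs; rewrite (maxs_F inv).
by have := v3_lt_v2_add_mexD; have := v2_add2_leq_v2S; lia.
Qed.

Lemma v3_add3_leq_v3S : c + 3 <= C.
Proof. by rewrite v3S_eq; have := v3_lt_v2_add_mexD; have := v2_add2_leq_v2S; lia. Qed.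

Lemma v31_add2_leq_v31S : c - a + 2 <= C - A.
Proof.
rewrite v3S_eq; have := v2S_ge n; have := v1_le_v2 n; have := v2_le_v3 n.
by have := v21_lt_mexD inv; have := v32_le_v21 inv; lia.
Qed.

Lemma v21S_lt_mexDS : B - A < mex (D n.+1).
Proof.
apply: mex_ge_mem => y; rewrite ltnS leq_eqVlt => /predU1P[->|lt_y].
  by rewrite DS mem_cat mem_head orbT.
have [lt_ym|lt_my|->] := ltngtP y m.
- exact/D_sub_DS/mem_lt_mex.
- exact/D_sub_DS/mem_D_between.
- by rewrite DS v3S_eq addKn mem_cat !inE eqxx !orbT.
Qed.

Lemma invariantS : invariant n.+1.
Proof.
have mD_le := mex_subset (@D_sub_DS n); have mF_le := mex_subset (@F_sub_FS n).
have mDS_gt := v21S_lt_mexDS; have mFS_gt := v1_lt_mexF n.+1.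
have v32S : C - B = m by rewrite v3S_eq addKn.
have v21S_ge : m <= B - A by have := v2S_ge n; lia.
have ABC : A <= B <= C by rewrite v1_le_v2 v2_le_v3.
have below_c x : x \in F n -> x <= c by move/leq_maxs; rewrite (maxs_F inv).
have below_ca x : x \in D n -> x <= c - a by move/leq_maxs; rewrite (maxs_D inv).
split.
- rewrite [X in from _ X]DS; apply: separated_from_extend; try lia.
  + exact: separated_from_le (separated_D inv) mD_le.
  + by move=> x /below_ca; have := v31_add2_leq_v31S; lia.
- rewrite [X in from _ X]FS; apply: separated_from_extend; try lia.
  + by have := separated_from_le (separated_F inv); rewrite -v1S; apply; lia.
  + by move=> x /below_c; have := v3_add3_leq_v3S; lia.
- by rewrite FS maxs_extend ?(maxs_F inv); have := v3_add3_leq_v3S; lia.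
- by rewrite DS maxs_extend ?(maxs_D inv); have := v31_add2_leq_v31S; lia.
- exact: mDS_gt.
- lia.
Qed.

End Step.

Lemma invariant_all n : invariant n.
Proof. by elim: n => [|n IH]; [exact: invariant0 | exact: invariantS]. Qed.

Theorem theorem3 (n : nat) : 1 <= n ->
  (* (a) *) (v1 n.-1 + 1 <= v1 n /\ v2 n.-1 + 2 <= v2 n /\ v3 n.-1 + 3 <= v3 n) /\
  (* (b) *) v3 n.-1 - v1 n.-1 + 2 <= v3 n - v1 n /\
  (* (c) *) gap_ge (from (mex (D n.-1)) (D n.-1)) 2 /\
  (* (d) *) gap_ge (from (mex (F n.-1) + mex (D n.-1)) (F n.-1)) 3 /\
  (* (e) *) (maxs (F n) = v3 n /\ v3 n = v2 n + mex (D n.-1)) /\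
  (* (f) *) maxs (D n) = v3 n - v1 n.
Proof.
case: n => [//|n] _ /=.
have inv := invariant_all n; have invS := invariantS inv.
have v1_lt_v1S : v1 n < v1 n.+1 by rewrite v1S v1_lt_mexF.
split; first by rewrite addn1 v1_lt_v1S v2_add2_leq_v2S ?v3_add3_leq_v3S.
split; first exact: v31_add2_leq_v31S.
split; first exact/separated_gap_ge/(separated_D inv).
split; first exact/separated_gap_ge/(separated_F inv).
by rewrite (maxs_F invS) (maxs_D invS) (v3S_eq inv).
Qed.
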